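(* Let $R\subset S$ be a distributive FCP ring extension with Loewy series $\{S_i\}_{i=0}^n$. Then $R\subset S$ is a $\mathcal P$-extension if and only if the following condition holds: for every $T\in[R,S]$ with $T\neq R$, $T$ is $\Pi$-irreducible in $[R,S]$ if and only if there exists some $i\in\{0,\ldots,n-1\}$ such that $T$ is an atom of $[S_i,S_{i+1}]$.
   Context: All rings are commutative with identity. $[R,S]$ is the lattice of $R$-subalgebras of $S$ (meet = intersection, join = product $TU$). FCP: every chain in $[R,S]$ is finite. $T\subset U$ minimal means $[T,U]=\{T,U\}$; an atom of $[A,B]$ is $T$ with $A\subset T$ minimal and $T\subseteq B$; the socle $\mathcal S[A,B]$ is the product of all atoms of $[A,B]$. Loewy series: $S_0=R$, $S_{i+1}=\mathcal S[S_i,S]$ while $S_i\neq S$, $n$ least with $S_n=S$. The extension is a $\mathcal P$-extension if $[R,S]=\bigcup_{i=0}^{n-1}[S_i,S_{i+1}]$. Distributive: $[R,S]$ is a distributive lattice. An element $T\in[R,S]$ is $\Pi$-irreducible if $T=T_1T_2$ with $T_1,T_2\in[R,S]$ implies $T=T_1$ or $T=T_2$. *)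

(* Subsets of the ambient ring S are Prop-valued predicates
   (S -> Prop); equality of subalgebras is Leibniz equality of predicates. *)
From mathcomp Require Import all_boot all_algebra.
From Stdlib Require List.
Set Implicit Arguments. Unset Strict Implicit. Unset Printing Implicit Defensive.
Import GRing.Theory.
Local Open Scope ring_scope.

Section RingExt.
Variable S : comPzRingType.

Definition ssubset (A B : S -> Prop) : Prop := forall x, A x -> B x.

Definition is_subring (A : S -> Prop) : Prop :=
  [/\ A 1, (forall x y, A x -> A y -> A (x - y)) & (forall x y, A x -> A y -> A (x * y))].

(* [A,B] : subrings T with A ⊆ T ⊆ B (for A a subring these are the
   A-subalgebras of B). *)
Definition ivl (A B : S -> Prop) (T : S -> Prop) : Prop :=
  [/\ is_subring T, ssubset A T & ssubset T B].

Definition gen (X : S -> Prop) : S -> Prop :=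
  fun x => forall B, is_subring B -> ssubset X B -> B x.

Definition sprod (T U : S -> Prop) : S -> Prop := gen (fun x => T x \/ U x).

Definition smeet (T U : S -> Prop) : S -> Prop := fun x => T x /\ U x.

Definition top : S -> Prop := fun _ => True.

Definition FCP (R : S -> Prop) : Prop :=
  forall C : (S -> Prop) -> Prop,
    (forall T, C T -> ivl R top T) ->
    (forall T U, C T -> C U -> ssubset T U \/ ssubset U T) ->
    exists l : list (S -> Prop), forall T, C T -> List.In T l.

Definition minimal_ext (T U : S -> Prop) : Prop :=
  [/\ ssubset T U, T <> U &
      forall V, ivl T U V -> V = T \/ V = U].

Definition is_atom (A B T : S -> Prop) : Prop :=
  is_subring T /\ minimal_ext A T /\ ssubset T B.

(* Socle of [A,B]: the product (in [A,B]) of all atoms of [A,B]; the empty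
   product is the bottom element A. *)
Definition socle (A B : S -> Prop) : S -> Prop :=
  gen (fun x => A x \/ exists T, is_atom A B T /\ T x).

Fixpoint loewy (R : S -> Prop) (i : nat) : S -> Prop :=
  match i with
  | O => R
  | i'.+1 => socle (loewy R i') top
  end.

Definition distributive_ext (R : S -> Prop) : Prop :=
  forall T U V, ivl R top T -> ivl R top U -> ivl R top V ->
    smeet T (sprod U V) = sprod (smeet T U) (smeet T V).

(* P-extension, for Loewy length n: [R,S] = ⋃_{i<n} [S_i, S_{i+1}]. *)
Definition P_ext (R : S -> Prop) (n : nat) : Prop :=
  forall T, ivl R top T ->
    exists i, (i < n)%N /\ ivl (loewy R i) (loewy R i.+1) T.

Definition Pi_irreducible (R T : S -> Prop) : Prop :=
  forall T1 T2, ivl R top T1 -> ivl R top T2 ->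
    T = sprod T1 T2 -> T = T1 \/ T = T2.

End RingExt.

(* An atom T of [S_i, S_(i+1)] is Pi-irreducible when [R,S] is the union of
   the intervals [S_k, S_(k+1)]: locating a proper subalgebra U of T in one of
   them forces U to lie in S_i, so a product of two proper subalgebras of T
   stays in S_i.  Conversely a Pi-irreducible T of [S_i, S_(i+1)] with T <> S_i
   (if T = S_i, move down to [S_(i-1), S_i]) is an atom: by FCP the socle S_(i+1)
   is a finite product of atoms, and distributivity makes a Pi-irreducible
   element below a finite product lie below one of its factors.  For the
   converse implication, a minimal T in no [S_k, S_(k+1)] is either
   Pi-irreducible, hence an atom, or a product T1 T2 of smaller subalgebras
   lying in [S_a, S_(a+1)] and [S_b, S_(b+1)], and then T lies in
   [S_max(a,b), S_(max(a,b)+1)].  FCP supplies the minimal and maximal elements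
   used, since a strictly monotone sequence in [R,S] would be an infinite
   chain. *)

From mathcomp Require Import all_boot all_algebra.
From Stdlib Require Import FunctionalExtensionality PropExtensionality.
From Stdlib Require Import Classical ClassicalEpsilon.
From Stdlib Require List FinFun.

Set Implicit Arguments.

Section Subalgebras.
Variable S : comPzRingType.
Implicit Types A B C D T U W X : S -> Prop.

Lemma ssubset_refl A : ssubset A A.
Proof. by []. Qed.

Lemma ssubset_trans A B C : ssubset A B -> ssubset B C -> ssubset A C.
Proof. by move=> hAB hBC x /hAB /hBC. Qed.

Lemma ssubset_antisym A B : ssubset A B -> ssubset B A -> A = B.
Proof.
move=> hAB hBA; apply: functional_extensionality => x.
by apply: propositional_extensionality; split; [apply: hAB | apply: hBA].
Qed.

Lemma gen_subring X : is_subring (gen X).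
Proof.
split=> [B [] //| x y hx hy B hB hXB | x y hx hy B hB hXB]; case: (hB) => _ hsub hmul.
- exact: hsub (hx B hB hXB) (hy B hB hXB).
- exact: hmul (hx B hB hXB) (hy B hB hXB).
Qed.

Lemma sub_gen X : ssubset X (gen X).
Proof. by move=> x hx B _; apply. Qed.

Lemma gen_sub X B : is_subring B -> ssubset X B -> ssubset (gen X) B.
Proof. by move=> hB hXB x; apply. Qed.

Lemma sprod_subring T U : is_subring (sprod T U).
Proof. exact: gen_subring. Qed.

Lemma sprodl T U : ssubset T (sprod T U).
Proof. by move=> x hx; apply: sub_gen; left. Qed.

Lemma sprodr T U : ssubset U (sprod T U).
Proof. by move=> x hx; apply: sub_gen; right. Qed.

Lemma sprod_sub T U B :
  is_subring B -> ssubset T B -> ssubset U B -> ssubset (sprod T U) B.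
Proof. by move=> hB hTB hUB; apply: gen_sub => // x [/hTB | /hUB]. Qed.

Lemma smeet_subring T U : is_subring T -> is_subring U -> is_subring (smeet T U).
Proof.
case=> T1 Tsub Tmul [U1 Usub Umul]; split=> // x y [hxT hxU] [hyT hyU].
- by split; [apply: Tsub | apply: Usub].
- by split; [apply: Tmul | apply: Umul].
Qed.

Lemma atom_ivl A B T : is_atom A B T -> ivl A B T.
Proof. by case=> hT [[hAT _ _] hTB]. Qed.

Lemma not_Pi_irreducible R T : ~ Pi_irreducible R T ->
  exists T1 T2, [/\ ivl R (@top S) T1, ivl R (@top S) T2, T = sprod T1 T2,
                    T <> T1 & T <> T2].
Proof.
move=> hred; apply: NNPP => hno; apply: hred => T1 T2 h1 h2 hT.
apply: NNPP => /not_or_and [hT1 hT2]; apply: hno; by exists T1, T2.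
Qed.

Section FiniteChains.
Variable R : S -> Prop.
Hypothesis fcpR : FCP R.

Lemma FCP_no_infinite_chain (f : nat -> S -> Prop) :
  (forall k, ivl R (@top S) (f k)) ->
  (forall i j, ssubset (f i) (f j) \/ ssubset (f j) (f i)) ->
  ~ FinFun.Injective f.
Proof.
move=> f_ivl f_chain f_inj.
have [l f_in_l] : exists l, forall T, (exists k, T = f k) -> List.In T l.
  apply: fcpR => [_ [k ->] // | _ _ [i ->] [j ->]]; exact: f_chain.
have f_nodup := FinFun.Injective_map_NoDup f_inj (List.seq_NoDup (length l).+1 0).
have f_incl : List.incl (List.map f (List.seq 0 (length l).+1)) l.
  by move=> _ /List.in_map_iff [k [<- _]]; apply: f_in_l; exists k.
have := List.NoDup_incl_length f_nodup f_incl.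
by rewrite List.length_map List.length_seq => /leP; rewrite ltnn.
Qed.

Section Extremal.
Variable le : (S -> Prop) -> (S -> Prop) -> Prop.
Hypothesis le_refl : forall A, le A A.
Hypothesis le_trans : forall A B C, le A B -> le B C -> le A C.
Hypothesis le_antisym : forall A B, le A B -> le B A -> A = B.
Hypothesis le_comparable : forall A B, le A B -> ssubset A B \/ ssubset B A.

(* Without an [le]-maximal element above [W0], choice yields an infinite
   strictly [le]-increasing chain starting at [W0]. *)
Lemma FCP_extremal (P : (S -> Prop) -> Prop) W0 :
  ivl R (@top S) W0 -> P W0 ->
  exists W, [/\ ivl R (@top S) W, P W &
    forall W', ivl R (@top S) W' -> P W' -> le W W' -> W' = W].
Proof.
move=> hW0 hPW0; apply: NNPP => no_ext.
pose E := {W | ivl R (@top S) W /\ P W}.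
have step (a : E) : exists b : E, le (sval a) (sval b) /\ sval a <> sval b.
  case: a => W [hW hPW] /=; apply: NNPP => no_b; apply: no_ext.
  exists W; split=> // W' hW' hPW' hle; apply: NNPP => hne; apply: no_b.
  by exists (exist _ W' (conj hW' hPW')); split=> // /esym.
pose next a := proj1_sig (constructive_indefinite_description _ (step a)).
have next_spec a : le (sval a) (sval (next a)) /\ sval a <> sval (next a).
  exact: proj2_sig (constructive_indefinite_description _ (step a)).
pose a0 : E := exist _ W0 (conj hW0 hPW0).
pose f k := sval (iter k next a0).
have f_mono i j : (i <= j)%N -> le (f i) (f j).
  move/subnKC <-; elim: (j - i) => [|k IH]; first by rewrite addn0.
  by rewrite addnS; apply: le_trans IH (next_spec _).1.
have f_neq i j : (i < j)%N -> f i <> f j.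
  move=> lt_ij eq_ij; have [le_next ne_next] := next_spec (iter i next a0).
  apply: ne_next; apply: le_antisym le_next _.
  by move: (f_mono i.+1 j lt_ij); rewrite -eq_ij.
apply: (@FCP_no_infinite_chain f).
- by move=> k; exact: (proj2_sig (iter k next _)).1.
- by move=> i j; case/orP: (leq_total i j) => /f_mono /le_comparable; tauto.
- move=> i j eq_ij; case: (ltngtP i j) => // [/f_neq | /f_neq/nesym]; exact.
Qed.
End Extremal.

Lemma FCP_maximal (P : (S -> Prop) -> Prop) W0 :
  ivl R (@top S) W0 -> P W0 ->
  exists W, [/\ ivl R (@top S) W, P W &
    forall W', ivl R (@top S) W' -> P W' -> ssubset W W' -> W' = W].
Proof.
apply: FCP_extremal => [A | A B C | A B | A B];
  [exact: ssubset_refl | exact: ssubset_trans | exact: ssubset_antisym | by left].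
Qed.

Lemma FCP_minimal (P : (S -> Prop) -> Prop) W0 :
  ivl R (@top S) W0 -> P W0 ->
  exists W, [/\ ivl R (@top S) W, P W &
    forall W', ivl R (@top S) W' -> P W' -> ssubset W' W -> W' = W].
Proof.
apply: (@FCP_extremal (fun A B => ssubset B A))
  => [A | A B C hAB hBC | A B hAB hBA | A B].
- exact: ssubset_refl.
- exact: ssubset_trans hBC hAB.
- exact: ssubset_antisym.
- by right.
Qed.
End FiniteChains.

Definition sprod_list D (l : seq (S -> Prop)) : S -> Prop :=
  foldr (fun A T => sprod T A) D l.

Lemma sprod_list_subring D l : is_subring D -> is_subring (sprod_list D l).
Proof. by case: l => [|A l] //= _; exact: sprod_subring. Qed.

Lemma sub_sprod_list D l : ssubset D (sprod_list D l).
Proof. by elim: l => [|A l IH] //=; apply: ssubset_trans IH (sprodl _ _). Qed.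

Lemma sprod_list_sub D l B : is_subring B -> ssubset D B ->
  (forall A, List.In A l -> ssubset A B) -> ssubset (sprod_list D l) B.
Proof.
move=> hB hDB; elim: l => [|A l IH] //= hlB.
by apply: sprod_sub => //; [apply: IH => A' hA'; apply: hlB; right | apply: hlB; left].
Qed.

(* In a distributive lattice [T = T /\ (T1 T2) = (T /\ T1) (T /\ T2)], so a
   Pi-irreducible element below a product lies below one of the factors. *)
Lemma Pi_irreducible_sub_sprod_list R D l T : distributive_ext R ->
  ivl R (@top S) D -> (forall A, List.In A l -> ivl R (@top S) A) ->
  ivl R (@top S) T -> Pi_irreducible R T -> ssubset T (sprod_list D l) ->
  ssubset T D \/ exists2 A, List.In A l & ssubset T A.
Proof.
move=> distR hD; elim: l => [|A l IH] hl hT irrT /=; first by left.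
have [hTs hRT _] := hT; have hA := hl A (or_introl erefl).
have hl' A' : List.In A' l -> ivl R (@top S) A' by move=> hA'; apply: hl; right.
have hP : ivl R (@top S) (sprod_list D l).
  have [hDs hRD _] := hD.
  split=> //; first exact: sprod_list_subring.
  exact: ssubset_trans hRD (sub_sprod_list _ _).
have meet_ivl U : ivl R (@top S) U -> ivl R (@top S) (smeet T U).
  by case=> hUs hRU _; split=> //; [exact: smeet_subring | move=> x hx; split; auto].
move=> hTP; have eT : T = smeet T (sprod (sprod_list D l) A).
  by apply: ssubset_antisym => [x hx | x []]; first split; auto.
rewrite distR // in eT.
case: (irrT _ _ (meet_ivl _ hP) (meet_ivl _ hA) eT) => eT'.
- have hTP' : ssubset T (sprod_list D l) by rewrite eT' => x [].
  have [hTD | [A' hA' hTA']] := IH hl' hT irrT hTP'; first by left.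
  by right; exists A' => //; right.
- by right; exists A; [left | rewrite eT' => x []].
Qed.

Lemma atom_ivl_top R D B A : ivl R (@top S) D -> is_atom D B A -> ivl R (@top S) A.
Proof.
by case=> _ hRD _ [hAs [[hDA _ _] _]]; split=> //; exact: ssubset_trans hRD hDA.
Qed.

Lemma socle_eq_sprod_list R D : FCP R -> ivl R (@top S) D ->
  exists l, (forall A, List.In A l -> is_atom D (@top S) A) /\
            socle D (@top S) = sprod_list D l.
Proof.
move=> fcpR hD; have [hDs hRD _] := hD.
pose P W :=
  exists2 l, (forall A, List.In A l -> is_atom D (@top S) A) & W = sprod_list D l.
have P_D : P D by exists nil.
have [W [hW [l hl eW] maxW]] := FCP_maximal fcpR P hD P_D; subst W.
have atom_sub A : is_atom D (@top S) A -> ssubset A (sprod_list D l).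
  move=> hA; rewrite -(maxW (sprod (sprod_list D l) A)); first exact: sprodr.
  - have [_ hRW _] := hW.
    by split=> //; [exact: sprod_subring | exact: ssubset_trans hRW (sprodl _ _)].
  - by exists (A :: l) => // A' [<- | /hl].
  - exact: sprodl.
exists l; split=> //; apply: ssubset_antisym.
- apply: gen_sub; first exact: sprod_list_subring.
  by move=> x [/sub_sprod_list | [A [/atom_sub]]] //; apply.
- apply: sprod_list_sub; first exact: gen_subring.
  + by move=> x hx; apply: sub_gen; left.
  + by move=> A hA x hx; apply: sub_gen; right; exists A; split; [exact: hl|].
Qed.

Lemma Pi_irreducible_atom_socle R D T : FCP R -> distributive_ext R ->
  ivl R (@top S) D -> ivl R (@top S) T -> Pi_irreducible R T ->
  ivl D (socle D (@top S)) T -> T <> D -> is_atom D (socle D (@top S)) T.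
Proof.
move=> fcpR distR hD hT irrT [hTs hDT hTsoc] neTD.
have [l [hl esoc]] := socle_eq_sprod_list fcpR hD.
have hl_ivl A : List.In A l -> ivl R (@top S) A by move/hl; exact: atom_ivl_top.
rewrite esoc in hTsoc.
have [hTD | [A hA hTA]] :=
  Pi_irreducible_sub_sprod_list l distR hD hl_ivl hT irrT hTsoc.
  by case: neTD; exact: ssubset_antisym.
have [_ [minDA _]] := hl A hA; have [_ _ minA] := minDA.
have [// | eTA] := minA T (And3 hTs hDT hTA).
by split=> //; split; [rewrite eTA | rewrite esoc].
Qed.
End Subalgebras.

Section Loewy.
Variable S : comPzRingType.
Variable R : S -> Prop.
Hypothesis subR : is_subring R.
Implicit Types T U : S -> Prop.

Lemma loewy_subring i : is_subring (loewy R i).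
Proof. by case: i => [|i] //=; exact: gen_subring. Qed.

Lemma loewy_sub_succ i : ssubset (loewy R i) (loewy R i.+1).
Proof. by move=> x hx; apply: sub_gen; left. Qed.

Lemma loewy_mono {i j} : (i <= j)%N -> ssubset (loewy R i) (loewy R j).
Proof.
move/subnKC <-; elim: (j - i) => [|k IH]; first by rewrite addn0.
by rewrite addnS; apply: ssubset_trans IH (loewy_sub_succ _).
Qed.

Lemma loewy_ivl i : ivl R (@top S) (loewy R i).
Proof. by split=> //; [exact: loewy_subring | exact: (loewy_mono (leq0n i))]. Qed.

(* Once two consecutive terms agree the series is constant, so it could not
   reach [S] for the first time at [n]. *)
Lemma loewy_neq_succ n k : loewy R n = @top S ->
  (forall m, (m < n)%N -> loewy R m <> @top S) ->
  (k < n)%N -> loewy R k <> loewy R k.+1.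
Proof.
move=> loewy_n loewy_lt lt_kn eq_k; apply: (loewy_lt k lt_kn).
rewrite -loewy_n -(subnKC (ltnW lt_kn)); elim: (n - k) => [|m IH].
  by rewrite addn0.
by rewrite addnS /= -IH.
Qed.

Lemma sprod_ivl_loewy a b T1 T2 :
  ivl (loewy R a) (loewy R a.+1) T1 -> ivl (loewy R b) (loewy R b.+1) T2 ->
  ivl (loewy R (maxn a b)) (loewy R (maxn a b).+1) (sprod T1 T2).
Proof.
move=> [_ hlo1 hhi1] [_ hlo2 hhi2]; split; first exact: sprod_subring.
- case/orP: (leq_total a b) => [/maxn_idPr -> | /maxn_idPl ->].
  + exact: ssubset_trans hlo2 (sprodr _ _).
  + exact: ssubset_trans hlo1 (sprodl _ _).
- apply: sprod_sub; first exact: loewy_subring.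
  + by apply: ssubset_trans hhi1 (loewy_mono _); rewrite ltnS leq_maxl.
  + by apply: ssubset_trans hhi2 (loewy_mono _); rewrite ltnS leq_maxr.
Qed.

Section PExtension.
Variable n : nat.
Hypothesis PR : P_ext R n.

(* [U] lies in some [[S_k, S_(k+1)]]: [k > i] would force [U = T], and [k = i]
   forces [U = S_i] by minimality of [S_i ⊂ T]. *)
Lemma P_ext_sub_atom i T U : is_atom (loewy R i) (loewy R i.+1) T ->
  ivl R (@top S) U -> ssubset U T -> U <> T -> ssubset U (loewy R i).
Proof.
move=> [_ [[hiT _ minT] hTi]] hU hUT neUT; have [k [_ [hUs hkU hUk]]] := PR hU.
case: (ltngtP k i) => [lt_ki | lt_ik | eq_ki].
- exact: ssubset_trans hUk (loewy_mono lt_ki).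
- case: neUT; apply: ssubset_antisym => //.
  exact: ssubset_trans hTi (ssubset_trans (loewy_mono lt_ik) hkU).
- rewrite eq_ki in hkU; have [-> | //] := minT U (And3 hUs hkU hUT).
  exact: ssubset_refl.
Qed.

Lemma P_ext_atom_Pi_irreducible i T :
  is_atom (loewy R i) (loewy R i.+1) T -> Pi_irreducible R T.
Proof.
move=> atomT T1 T2 h1 h2 eT; apply: NNPP => /not_or_and [neT1 neT2].
have [_ [[hiT neiT _] _]] := atomT.
apply: neiT; apply: ssubset_antisym => //.
rewrite eT; apply: sprod_sub; first exact: loewy_subring.
- by apply: (P_ext_sub_atom atomT h1 _ (nesym neT1)); rewrite eT; exact: sprodl.
- by apply: (P_ext_sub_atom atomT h2 _ (nesym neT2)); rewrite eT; exact: sprodr.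
Qed.

Lemma P_ext_Pi_irreducible_atom T : FCP R -> distributive_ext R ->
  loewy R n = @top S -> (forall m, (m < n)%N -> loewy R m <> @top S) ->
  ivl R (@top S) T -> T <> R -> Pi_irreducible R T ->
  exists i, (i < n)%N /\ is_atom (loewy R i) (loewy R i.+1) T.
Proof.
move=> fcpR distR loewy_n loewy_lt hT neTR irrT; have [j [lt_jn hTj]] := PR hT.
suff [i [le_ij hTi neTi]] : exists i,
    [/\ (i <= j)%N, ivl (loewy R i) (loewy R i.+1) T & T <> loewy R i].
  exists i; split; first exact: leq_ltn_trans le_ij lt_jn.
  exact: Pi_irreducible_atom_socle fcpR distR (loewy_ivl i) hT irrT hTi neTi.
have [eTj | ] := classic (T = loewy R j); last by exists j.
case: j => [|j] in lt_jn hTj eTj *; first by case: neTR.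
exists j; rewrite eTj; split=> //.
  by split; [exact: loewy_subring | exact: loewy_sub_succ | ].
by move/esym; exact: loewy_neq_succ loewy_n loewy_lt (ltnW lt_jn).
Qed.
End PExtension.

Lemma Pi_irreducible_atom_P_ext n : FCP R -> (0 < n)%N ->
  (forall T, ivl R (@top S) T -> T <> R -> Pi_irreducible R T ->
     exists i, (i < n)%N /\ is_atom (loewy R i) (loewy R i.+1) T) ->
  P_ext R n.
Proof.
move=> fcpR n_gt0 irr_atom T hT; apply: NNPP => notT.
pose in_loewy_ivl W := exists i, (i < n)%N /\ ivl (loewy R i) (loewy R i.+1) W.
have [W [hW notW minW]] := FCP_minimal fcpR (fun W => ~ in_loewy_ivl W) hT notT.
apply: notW; have [-> | neWR] := classic (W = R).
  exists 0%N; split=> //.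
  by split; [exact: subR | exact: ssubset_refl | exact: loewy_sub_succ 0].
have sub_ivl U : ivl R (@top S) U -> ssubset U W -> U <> W -> in_loewy_ivl U.
  by move=> hU hUW neUW; apply: NNPP => notU; exact/neUW/minW.
have [irrW | /not_Pi_irreducible [T1 [T2 [h1 h2 eW neW1 neW2]]]] :=
  classic (Pi_irreducible R W).
  by have [i [lt_in /atom_ivl hWi]] := irr_atom W hW neWR irrW; exists i.
have sub1 : ssubset T1 W by rewrite eW; exact: sprodl.
have sub2 : ssubset T2 W by rewrite eW; exact: sprodr.
have [a [lt_an ha]] := sub_ivl T1 h1 sub1 (nesym neW1).
have [b [lt_bn hb]] := sub_ivl T2 h2 sub2 (nesym neW2).
exists (maxn a b); rewrite gtn_max lt_an lt_bn eW; split=> //.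
exact: sprod_ivl_loewy.
Qed.
End Loewy.

Theorem theorem8p6 (S : comPzRingType) (R : S -> Prop) (n : nat) :
  is_subring R -> R <> @top S ->
  FCP R -> distributive_ext R ->
  loewy R n = @top S -> (forall m, (m < n)%N -> loewy R m <> @top S) ->
  (P_ext R n <->
   (forall T, ivl R (@top S) T -> T <> R ->
      (Pi_irreducible R T <->
       exists i, (i < n)%N /\ is_atom (loewy R i) (loewy R i.+1) T))).
Proof.
move=> subR neRtop fcpR distR loewy_n loewy_lt.
have n_gt0 : (0 < n)%N by case: n loewy_n {loewy_lt} => // /neRtop.
split=> [PR T hT neTR | irr_atom].
  split; first exact: P_ext_Pi_irreducible_atom.
  by case=> i [_ /(P_ext_atom_Pi_irreducible subR PR)].
apply: Pi_irreducible_atom_P_ext => // T hT neTR.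
exact: (irr_atom T hT neTR).1.
Qed.
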